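(* Suppose $\frac{\Delta_L}{\overline{\Delta}_L}\le\sqrt{n}$. Let $\epsilon\in(0,1)$ and $c\ge1$ a constant, and sample $n_b=\frac{c}{1-\epsilon}\Delta$ batches, each consisting of $B=(1-\epsilon)\frac{n}{\Delta}$ updates drawn uniformly at random with replacement from the $n$ updates. For the $i$-th batch let $G_u^i$ be the subgraph of $G_u$ induced by its sampled updates and $E_u^i$ its number of edges. Then the total number of edges $Z=\sum_{i=1}^{n_b}E_u^i$ is less than $O(E_u\log n)$ with probability $1-n^{-\Omega(\log n)}$.
   Context: $G_u$ is a bipartite graph whose left vertices are $n$ updates $u_1,\dots,u_n$ and whose right vertices are $d$ model variables, with $u_i$ adjacent to a variable iff the update reads or writes it; $E_u$ is its number of edges, $\Delta_L$ its maximum left degree and $\overline{\Delta}_L$ its average left degree. The conflict graph on the updates joins two updates iff they share a variable; $\Delta$ is its maximum degree. The induced subgraph of a batch consists of the sampled updates together with all their incident edges and adjacent variables. *)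

From HB Require Import structures.
From mathcomp Require Import all_boot all_order all_algebra.
From mathcomp Require Import all_classical all_reals all_analysis.
Set Implicit Arguments. Unset Strict Implicit. Unset Printing Implicit Defensive.
Import Order.TTheory GRing.Theory Num.Theory.
Local Open Scope ring_scope.

(* The bipartite graph G_u: updates 'I_n on the left, variables 'I_d on the
   right; [adj i v] iff update i reads or writes variable v. *)
Section Graph.
Variables (n d : nat) (adj : 'I_n -> 'I_d -> bool).

Definition ldeg (i : 'I_n) : nat := #|[set v | adj i v]|.

Definition Eu : nat := (\sum_(i < n) ldeg i)%N.

Definition DeltaL : nat := (\max_(i < n) ldeg i)%N.

Definition conflict (i j : 'I_n) : bool :=
  (i != j) && [exists v, adj i v && adj j v].

Definition Delta : nat := (\max_(i < n) #|[set j | conflict i j]|)%N.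

(* number of edges of the subgraph induced by the updates sampled in a
   batch s (a sequence of B draws, with replacement): the set of distinct
   sampled updates together with all their incident edges *)
Definition batch_edges (B : nat) (s : {ffun 'I_B -> 'I_n}) : nat :=
  (\sum_(i in [set s k | k : 'I_B]) ldeg i)%N.

Definition Ztot (nb B : nat) (w : {ffun 'I_nb -> {ffun 'I_B -> 'I_n}}) : nat :=
  (\sum_(b < nb) batch_edges (w b))%N.
End Graph.

Definition unif_prob (R : realType) (T : finType) (A : {set T}) : R :=
  #|A|%:R / #|T|%:R.

(* The total Z is at most the sum S of the left degrees of all nb B draws,
   counted with multiplicity, and q^S factorizes over the independent draws.
   For q = 1 + 1/(2 Delta_L) each degree satisfies q^deg <= 1 + deg/Delta_L,
   so E[q^S] <= (1 + E_u/(n Delta_L))^(nb B) <= exp(c K) with K = E_u/Delta_L,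
   because nb B <= c n.  Markov's inequality for q^S at the threshold
   9 c E_u ln n, with ln q >= 1/(3 Delta_L), bounds the tail by
   exp(c K (1 - 3 ln n)); the hypothesis Delta_L / avg-degree <= sqrt n says
   K >= sqrt n >= (ln n)/2, which turns the bound into n^(-(ln n)/2). *)

From mathcomp Require Import all_boot all_order all_algebra.
From mathcomp Require Import all_classical all_reals all_analysis.
From mathcomp Require Import ring lra.
Set Implicit Arguments.
Unset Strict Implicit.
Unset Printing Implicit Defensive.

Import Order.TTheory GRing.Theory Num.Theory.
Local Open Scope ring_scope.

Lemma leq_sum_imset (I J : finType) (h : I -> J) (A : {pred I}) (F : J -> nat) :
  (\sum_(j in h @: A) F j <= \sum_(i in A) F (h i))%N.
Proof.
rewrite (partition_big_imset h); apply: leq_sum => _ /imsetP[i Ai ->].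
by rewrite (bigD1 i) ?Ai ?eqxx //= leq_addr.
Qed.

Lemma sum_ffun2_prod (R : comPzSemiRingType) (I J K : finType) (F : K -> R) :
  \sum_(w : {ffun I -> {ffun J -> K}}) \prod_i \prod_j F (w i j)
  = ((\sum_k F k) ^+ #|J|) ^+ #|I|.
Proof.
rewrite -(bigA_distr_bigA (fun i (s : {ffun J -> K}) => \prod_j F (s j))) /=.
rewrite -[RHS]prodr_const; apply: eq_bigr => i _.
by rewrite -(bigA_distr_bigA (fun j k => F k)) -prodr_const.
Qed.

Lemma mul_card_le_sum (R : numDomainType) (T : finType) (A : {set T})
    (f : T -> R) (a : R) :
  (forall x, 0 <= f x) -> {in A, forall x, a <= f x} ->
  #|A|%:R * a <= \sum_x f x.
Proof.
move=> f_ge0 f_geA; rewrite mulr_natl -sumr_const.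
apply: le_trans (_ : \sum_(x in A) f x <= _); first exact: ler_sum.
by rewrite [leRHS](bigID (mem A)) /= lerDl sumr_ge0.
Qed.

Lemma le_exprn1Dx (R : realDomainType) (x : R) (l : nat) :
  0 <= x -> 2 * l%:R * x <= 1 -> (1 + x) ^+ l <= 1 + 2 * l%:R * x.
Proof.
move=> x_ge0; elim: l => [|l IHl] lx; first by rewrite expr0 mulr0 mul0r addr0.
have lx' : 2 * l%:R * x <= 1.
  by apply: le_trans lx; rewrite ler_wpM2r // ler_wpM2l // ler_nat.
rewrite exprSr; apply: le_trans (ler_wpM2r _ (IHl lx')) _; first lra.
move: lx; rewrite -natr1 => lx; have l_ge0 : 0 <= l%:R :> R by [].
nra.
Qed.

Lemma ln_ge_1BV (R : realType) (x : R) : 0 < x -> 1 - x^-1 <= ln x.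
Proof.
move=> x_gt0; have : ln x^-1 <= x^-1 - 1.
  have := @le_ln1Dx R (x^-1 - 1); rewrite addrCA subrr addr0; apply.
  by rewrite ltrBrDl subrr invr_gt0.
rewrite lnV ?posrE //; lra.
Qed.

Lemma ln_le_2sqrt (R : realType) (x : R) : 0 < x -> ln x <= 2 * Num.sqrt x.
Proof.
move=> x_gt0; have s_gt0 : 0 < Num.sqrt x by rewrite sqrtr_gt0.
rewrite -[in ln x](sqr_sqrtr (ltW x_gt0)) expr2 lnM ?posrE //.
have := ln_sublinear s_gt0; lra.
Qed.

Lemma inv3_le_ln1DV2 (R : realType) (M : R) :
  1 <= M -> (3 * M)^-1 <= ln (1 + (2 * M)^-1).
Proof.
move=> M_ge1; have q_gt0 : 0 < 1 + (2 * M)^-1 by rewrite ltr_wpDr ?invr_ge0 //; lra.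
apply: le_trans (ln_ge_1BV q_gt0).
have -> : 1 - (1 + (2 * M)^-1)^-1 = (2 * M + 1)^-1 by field; lra.
by rewrite lef_pV2 ?posrE //; lra.
Qed.

Lemma half_le_ln_nat (R : realType) (n : nat) : (2 <= n)%N -> 2^-1 <= ln n%:R :> R.
Proof.
move=> n_ge2; have nR_gt0 : 0 < n%:R :> R by rewrite ltr0n (leq_trans _ n_ge2).
apply: le_trans (ln_ge_1BV nR_gt0).
have : n%:R^-1 <= 2^-1 :> R by rewrite lef_pV2 ?posrE // ler_nat.
lra.
Qed.

Lemma exprDr_le_expR (R : realType) (x y : R) (k : nat) :
  0 < x -> 0 <= y -> (x + y) ^+ k <= x ^+ k * expR (k%:R * (y / x)).
Proof.
move=> x_gt0 y_ge0; rewrite expRM_natl -exprMn.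
have -> : x + y = x * (1 + y / x) by field; rewrite gt_eqF.
have x_ge0 := ltW x_gt0.
apply: lerXn2r; rewrite ?nnegrE ?mulr_ge0 ?expR_ge0 ?addr_ge0 ?divr_ge0 //.
by rewrite ler_wpM2l // expR_ge1Dx.
Qed.

Lemma sqrt_le_of_div_le (R : rcfType) (x y : R) :
  0 < x -> 0 < y -> x / y <= Num.sqrt x -> Num.sqrt x <= y.
Proof.
move=> x_gt0 y_gt0; have s_gt0 : 0 < Num.sqrt x by rewrite sqrtr_gt0.
rewrite ler_pdivrMr // -{1}(sqr_sqrtr (ltW x_gt0)) expr2 ler_pM2l //.
Qed.

Lemma mul_le_of_le_mul_div (R : realFieldType) (a b u v D : R) :
  0 <= a -> 0 <= b -> 0 <= u * v -> 0 <= D ->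
  a <= u * D -> b <= v / D -> a * b <= u * v.
Proof.
(* For [D = 0] the hypothesis on [b] reads [b <= 0], since [v / 0 = 0]. *)
move=> a_ge0 b_ge0 uv_ge0; rewrite le_eqVlt => /predU1P[<- _|D_gt0 aD bD].
  by rewrite invr0 mulr0 => b_le0; rewrite (@le_anti _ _ b 0) ?b_le0 // mulr0.
apply: le_trans (ler_pM a_ge0 b_ge0 aD bD) _.
by rewrite mulrACA divff ?gt_eqF // mulr1.
Qed.

Lemma tail_exponent_le (R : realFieldType) (c m K L : R) :
  1 <= c -> 0 <= m <= c -> 2^-1 <= L -> L <= 2 * K ->
  m * K - 3 * c * K * L <= - (2^-1 * L) * L.
Proof.
move=> c_ge1 /andP[m_ge0 m_le_c] L_ge L_le.
have K_ge0 : 0 <= K by lra.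
(* m K - 3cKL <= cK (1 - 3L) <= K (1 - 3L) <= - K L <= - L^2 / 2 *)
have mK_le_cK : m * K <= c * K by rewrite ler_wpM2r.
have c_excess_ge0 : 0 <= (c - 1) * (K * (3 * L - 1)) by rewrite !mulr_ge0 //; lra.
have L_excess_ge0 : 0 <= K * (2 * L - 1) by rewrite mulr_ge0 //; lra.
have K_excess_ge0 : 0 <= L * (2 * K - L) by rewrite mulr_ge0 //; lra.
lra.
Qed.

Section RandomBatches.
Variables (n d : nat) (adj : 'I_n -> 'I_d -> bool) (nb B : nat).

Local Notation draws := {ffun 'I_nb -> {ffun 'I_B -> 'I_n}}.

Lemma ldeg_le_DeltaL i : (ldeg adj i <= DeltaL adj)%N.
Proof. exact: leq_bigmax. Qed.

Lemma DeltaL_le_Eu : (DeltaL adj <= Eu adj)%N.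
Proof. by apply/bigmax_leqP => i _; rewrite /Eu (bigD1 i) //= leq_addr. Qed.

Definition draw_degrees (w : draws) : nat :=
  \sum_(b < nb) \sum_(k < B) ldeg adj (w b k).

Lemma Ztot_le_draw_degrees (w : draws) : (Ztot adj w <= draw_degrees w)%N.
Proof. by apply: leq_sum => b _; apply: leq_sum_imset. Qed.

Lemma Ztot_le_DeltaL (w : draws) : (Ztot adj w <= nb * (B * DeltaL adj))%N.
Proof.
apply: leq_trans (Ztot_le_draw_degrees w) _.
have -> : (nb * (B * DeltaL adj) = \sum_(b < nb) \sum_(k < B) DeltaL adj)%N.
  by rewrite !sum_nat_const !card_ord.
by apply: leq_sum => b _; apply: leq_sum => k _; apply: ldeg_le_DeltaL.
Qed.

Lemma Ztot_tail_DeltaL0 (R : realType) (t : R) : DeltaL adj = 0%N -> 0 <= t ->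
  unif_prob R [set w : draws | t < (Ztot adj w)%:R] = 0.
Proof.
move=> M0 t_ge0; rewrite /unif_prob (_ : [set w | _] = finset.set0) ?cards0 ?mul0r //.
apply/setP => w; rewrite !inE; apply/negbTE; rewrite -leNgt (le_trans _ t_ge0) //.
by have := Ztot_le_DeltaL w; rewrite M0 !muln0 leqn0 => /eqP ->.
Qed.

Lemma sqrt_le_Eu_div_DeltaL (R : rcfType) : (0 < n)%N -> (0 < DeltaL adj)%N ->
  (DeltaL adj)%:R / ((Eu adj)%:R / n%:R) <= Num.sqrt (n%:R : R) ->
  Num.sqrt (n%:R : R) <= (Eu adj)%:R / (DeltaL adj)%:R.
Proof.
move=> n_gt0 M_gt0; have nR_gt0 : 0 < n%:R :> R by rewrite ltr0n.
have E_gt0 : 0 < (Eu adj)%:R :> R by rewrite ltr0n (leq_trans M_gt0 DeltaL_le_Eu).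
have M_gt0R : 0 < (DeltaL adj)%:R :> R by rewrite ltr0n.
have -> : (DeltaL adj)%:R / ((Eu adj)%:R / n%:R)
          = n%:R / ((Eu adj)%:R / (DeltaL adj)%:R) :> R.
  by field; rewrite !gt_eqF.
exact/sqrt_le_of_div_le/divr_gt0.
Qed.

Lemma sum_exprn_draw_degrees (R : comPzSemiRingType) (q : R) :
  \sum_(w : draws) q ^+ draw_degrees w = ((\sum_i q ^+ ldeg adj i) ^+ B) ^+ nb.
Proof.
rewrite -[X in _ ^+ X ^+ _]card_ord -[X in _ ^+ X]card_ord -sum_ffun2_prod.
by apply: eq_bigr => w _; rewrite expr_sum; apply: eq_bigr => b _; rewrite expr_sum.
Qed.

Lemma sum_exprn_ldeg_le (R : realFieldType) : (0 < DeltaL adj)%N ->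
  \sum_i (1 + (2 * (DeltaL adj)%:R)^-1) ^+ ldeg adj i
  <= n%:R + (Eu adj)%:R / (DeltaL adj)%:R :> R.
Proof.
move=> M_gt0; have MR_gt0 : 0 < (DeltaL adj)%:R :> R by rewrite ltr0n.
have ldeg_pow i : (1 + (2 * (DeltaL adj)%:R)^-1) ^+ ldeg adj i
                  <= 1 + (ldeg adj i)%:R / (DeltaL adj)%:R :> R.
  have e : 2 * (ldeg adj i)%:R * (2 * (DeltaL adj)%:R)^-1
           = (ldeg adj i)%:R / (DeltaL adj)%:R :> R by field; rewrite gt_eqF.
  rewrite -e; apply: le_exprn1Dx; first by rewrite invr_ge0 mulr_ge0 ?ltW.
  by rewrite e ler_pdivrMr // mul1r ler_nat ldeg_le_DeltaL.
apply: le_trans (ler_sum _ (fun i _ => ldeg_pow i)) _.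
by rewrite big_split /= sumr_const card_ord -mulr_suml -natr_sum.
Qed.

Lemma Ztot_tail (R : realType) (t : R) :
  (0 < n)%N -> (0 < DeltaL adj)%N -> 0 <= t ->
  unif_prob R [set w : draws | t < (Ztot adj w)%:R]
  <= expR ((nb * B)%:R / n%:R * ((Eu adj)%:R / (DeltaL adj)%:R)
           - t / (3 * (DeltaL adj)%:R)).
Proof.
move=> n_gt0 M_gt0 t_ge0.
have nR_gt0 : 0 < n%:R :> R by rewrite ltr0n.
have MR_gt0 : 0 < (DeltaL adj)%:R :> R by rewrite ltr0n.
set q := 1 + (2 * (DeltaL adj)%:R)^-1 : R.
have q_gt0 : 0 < q by rewrite ltr_wpDr ?invr_ge0 ?mulr_ge0 ?ltW.
have lnq_ge : (3 * (DeltaL adj)%:R)^-1 <= ln q by rewrite inv3_le_ln1DV2 ?ler1n.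
have lnq_ge0 : 0 <= ln q by apply: le_trans lnq_ge; rewrite invr_ge0 mulr_ge0 ?ltW.
have markov : #|[set w : draws | t < (Ztot adj w)%:R]|%:R * expR (t * ln q)
              <= \sum_(w : draws) q ^+ draw_degrees w.
  apply: mul_card_le_sum => [w|w]; first exact: exprn_ge0 (ltW q_gt0).
  rewrite inE => /ltW t_le.
  rewrite -[X in _ <= X]lnK ?posrE ?exprn_gt0 // lnXn // -mulr_natl ler_expR.
  by apply: ler_wpM2r => //; rewrite (le_trans t_le) // ler_nat Ztot_le_draw_degrees.
have mgf : \sum_(w : draws) q ^+ draw_degrees w
           <= n%:R ^+ (B * nb)
              * expR ((B * nb)%:R * ((Eu adj)%:R / (DeltaL adj)%:R / n%:R)).
  rewrite sum_exprn_draw_degrees -exprM.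
  apply: le_trans (exprDr_le_expR _ nR_gt0 _); last by rewrite divr_ge0.
  apply: lerXn2r; rewrite ?nnegrE ?sumr_ge0 ?addr_ge0 ?divr_ge0 ?sum_exprn_ldeg_le //.
  by move=> i _; rewrite exprn_ge0 ?ltW.
rewrite /unif_prob !card_ffun !card_ord natrX natrX -exprM.
apply: le_trans (_ : _ <= expR ((B * nb)%:R * ((Eu adj)%:R / (DeltaL adj)%:R / n%:R)
                               - t * ln q)) _.
  rewrite expRB ler_pdivrMr ?exprn_gt0 // mulrAC ler_pdivlMr ?expR_gt0 //.
  by rewrite [leRHS]mulrC (le_trans markov mgf).
rewrite ler_expR lerD ?lerN2 ?ler_wpM2l //.
by rewrite mulnC mulrA mulrAC.
Qed.

End RandomBatches.

Theorem lemma3 (R : realType) (eps c : R) :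
  0 < eps < 1 -> 1 <= c ->
  exists (C kappa : R) (N : nat), 0 < C /\ 0 < kappa /\
  forall (n d : nat) (adj : 'I_n -> 'I_d -> bool) (nb B : nat),
    (N <= n)%N ->
    (DeltaL adj)%:R / ((Eu adj)%:R / n%:R) <= Num.sqrt (n%:R : R) ->
    (* nb = floor (c / (1 - eps) * Delta) *)
    nb%:R <= c / (1 - eps) * (Delta adj)%:R < nb%:R + 1 ->
    (* B = floor ((1 - eps) * n / Delta) *)
    B%:R <= (1 - eps) * n%:R / (Delta adj)%:R < B%:R + 1 ->
    unif_prob R
      [set w : {ffun 'I_nb -> {ffun 'I_B -> 'I_n}} |
         C * (Eu adj)%:R * ln (n%:R : R) < (Ztot adj w)%:R]
    <= (n%:R : R) `^ (- (kappa * ln (n%:R : R))).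
Proof.
move=> /andP[eps_gt0 eps_lt1] c_ge1.
exists (9 * c), 2^-1, 2%N; split; first lra; split; first by rewrite invr_gt0.
move=> n d adj nb B n_ge2 sqrt_le /andP[nb_le _] /andP[B_le _].
have n_gt0 : (0 < n)%N := ltnW n_ge2.
have nR_gt0 : 0 < n%:R :> R by rewrite ltr0n.
have thr_ge0 : 0 <= 9 * c * (Eu adj)%:R * ln n%:R.
  by rewrite !mulr_ge0 ?ln_ge0 ?ler1n //; lra.
rewrite /powR gt_eqF //.
have [M0 | M_gt0] := posnP (DeltaL adj).
  by rewrite Ztot_tail_DeltaL0 ?expR_ge0.
apply: le_trans (Ztot_tail nb B n_gt0 M_gt0 thr_ge0) _; rewrite ler_expR.
set K := (Eu adj)%:R / (DeltaL adj)%:R : R; set L := ln n%:R : R.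
have L_le_2K : L <= 2 * K.
  apply: le_trans (ln_le_2sqrt nR_gt0) (ler_wpM2l (ler0n _ 2) _).
  exact: sqrt_le_Eu_div_DeltaL.
have draws_le : (0 : R) <= (nb * B)%:R / n%:R <= c.
  apply/andP; split; first exact: divr_ge0.
  rewrite ler_pdivrMr // natrM (_ : c * n%:R = c / (1 - eps) * ((1 - eps) * n%:R)).
    apply: mul_le_of_le_mul_div nb_le B_le => //.
    by rewrite !(mulr_ge0, invr_ge0) //; lra.
  by field; lra.
suff -> : 9 * c * (Eu adj)%:R * L / (3 * (DeltaL adj)%:R) = 3 * c * K * L.
  exact: tail_exponent_le c_ge1 draws_le (half_le_ln_nat R n_ge2) L_le_2K.
by rewrite /K; field; rewrite gt_eqF // ltr0n.
Qed.
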